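(* Let $\mathbb{K}$ be a field with $\mathbb{Q}\subseteq\mathbb{K}\subseteq\mathbb{C}$, and let $m,n$ be positive integers with $1\le m<n$. Suppose the complex numbers $x_1,\dots,x_n$ and $y_1,\dots,y_m$ satisfy $$f_j(x_1,\dots,x_n,y_1,\dots,y_m)=0\qquad(j=1,\dots,m)$$ for some polynomials $f_j(X_1,\dots,X_n,Y_1,\dots,Y_m)\in\mathbb{K}[X_1,\dots,X_n,Y_1,\dots,Y_m]$. If $x_1,\dots,x_n$ are algebraically independent over $\mathbb{K}$ and $$\det\Big(\frac{\partial f_j}{\partial X_i}(x_1,\dots,x_n,y_1,\dots,y_m)\Big)_{1\le i,j\le m}\neq0,$$ then $y_1,\dots,y_m$ are algebraically independent over the field $\mathbb{K}(x_{m+1},\dots,x_n)$.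
   Context: The determinant is of the $m\times m$ matrix with rows indexed by $j$ and columns indexed by $i$, both ranging over $1,\dots,m$ (only the partial derivatives with respect to $X_1,\dots,X_m$ are used). *)

From HB Require Import structures.
From mathcomp Require Import all_boot all_order all_algebra.
From mathcomp Require Import Rstruct.
From mathcomp Require Import complex.
From mathcomp Require Import mpoly.
Set Implicit Arguments. Unset Strict Implicit. Unset Printing Implicit Defensive.
Import Order.TTheory GRing.Theory Num.Theory.
Local Open Scope ring_scope.

Notation C := (complex Rdefinitions.R).

(* L (a subset of C) is a subfield of C: contains 1, closed under
   subtraction and division (x / 0 = 0 in MathComp, as in divring_closed). *)
Definition is_subfield (L : C -> Prop) : Prop :=
  [/\ L 1,
      forall a b, L a -> L b -> L (a - b) &
      forall a b, L a -> L b -> L (a / b)].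

Definition gen_field (K S : C -> Prop) : C -> Prop :=
  fun z => forall L : C -> Prop, is_subfield L ->
     (forall a, K a -> L a) -> (forall a, S a -> L a) -> L z.

Definition coeffs_in (L : C -> Prop) (k : nat) (p : {mpoly C[k]}) : Prop :=
  forall mono, mono \in msupp p -> L p@_mono.

Definition alg_indep_over (L : C -> Prop) (k : nat) (z : 'I_k -> C) : Prop :=
  forall p : {mpoly C[k]}, coeffs_in L p -> p.@[z] = 0 -> p = 0.

(* The point (x_1..x_n, y_1..y_m) of C^(n+m); variable X_i is index i-1,
   variable Y_j is index n + j - 1. *)
Definition join_pt (n m : nat) (x : 'I_n -> C) (y : 'I_m -> C) : 'I_(n + m) -> C :=
  fun k => match split k with inl i => x i | inr j => y j end.

(* Tangent vectors at z = (x, y): call d tangent if dderiv z d p = 0 for every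
   K-polynomial p vanishing at z.  As x is algebraically independent over K,
   arbitrary values of d on x extend, one y-coordinate at a time, to a tangent
   vector: the value at the new coordinate is forced by its minimal relation, to
   which every other relation reduces.  Let d_k extend the k-th basis vector.
   Applied to the f_j, the d_k with k <= m give J + B V = 0, where J is the
   Jacobian of the statement and V is the matrix (d_k y_l), so V is invertible.
   A nonzero algebraic relation among y over K(x_(m+1), ..., x_n) yields, after
   clearing denominators, a K-polynomial P in x_(m+1), ..., x_n, y vanishing at z,
   which by minimality can be taken with a partial derivative not vanishing at z.
   But d_1, ..., d_m annihilate P, and since P does not involve x_1, ..., x_m this
   reads (dP/dy) V = 0, so all y-partials of P vanish at z; then d_k for k > m
   shows that the x-partials vanish as well. *)

From HB Require Import structures.
From mathcomp Require Import all_boot all_order all_algebra.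
From mathcomp Require Import Rstruct complex mpoly.
From Stdlib Require Import Classical ClassicalEpsilon.
From mathcomp Require Import ring zify.
Set Implicit Arguments. Unset Strict Implicit. Unset Printing Implicit Defensive.
Import Order.TTheory GRing.Theory Num.Theory.
Local Open Scope ring_scope.

(* Membership in [K], decided classically so that [mpolyOver] applies to [K]. *)
Definition memb (K : C -> Prop) : {pred C} :=
  fun c => if excluded_middle_informative (K c) then true else false.

Lemma membP K c : reflect (K c) (c \in memb K).
Proof. by rewrite unfold_in /memb; case: excluded_middle_informative => H; constructor. Qed.

Lemma subfield_divring_closed K : is_subfield K -> divring_closed (memb K).
Proof.
case=> K1 KB Kdiv; split; first exact/membP.
- by move=> a b /membP Ka /membP Kb; apply/membP/KB.
- by move=> a b /membP Ka /membP Kb; apply/membP/Kdiv.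
Qed.

Definition subfield_pred K (HK : is_subfield K) : divringClosed C :=
  HB.pack (memb K) (GRing.isDivringClosed.Build C (memb K) (subfield_divring_closed HK)).

Lemma coeffs_inP K (HK : is_subfield K) N (p : {mpoly C[N]}) :
  coeffs_in K p <-> p \is a mpolyOver N (subfield_pred HK).
Proof.
split=> [Kp | /mpolyOverP Kp m _]; last exact/membP/Kp.
apply/mpolyOverP => m; have [/Kp/membP //|/memN_msupp_eq0 ->] := boolP (m \in msupp p).
exact: rpred0.
Qed.

Lemma exists_minimizer (T : Type) (P : T -> Prop) (f : T -> nat) :
  (exists t, P t) -> exists t, P t /\ forall u, P u -> (f t <= f u)%N.
Proof.
move=> [t0 Pt0]; elim: {t0}(f t0) {-2}t0 (leqnn (f t0)) Pt0 => [|s IHs] t ft Pt.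
  by exists t; split => // u _; move: ft; rewrite leqn0 => /eqP ->.
have [[u [Pu fut]]|] := classic (exists u, P u /\ (f u < f t)%N).
  by apply: (IHs u) => //; rewrite -ltnS (leq_trans fut ft).
move=> no_less; exists t; split => // u Pu; rewrite leqNgt; apply/negP => fut.
by apply: no_less; exists u.
Qed.

Lemma size_lead_coef_elim (R : comNzRingType) (p q : {poly R}) :
  q != 0 -> (size q <= size p)%N ->
  (size (lead_coef q *: p - lead_coef p *: ('X^(size p - size q) * q))%R < size p)%N.
Proof.
move=> q0 qp; have sq : (0 < size q)%N by rewrite size_poly_gt0.
have sp : (0 < size p)%N by apply: leq_trans qp.
rewrite -(prednK sp) ltnS; apply/leq_sizeP => j ej.
rewrite coefB !coefZ coefXnM ifN; last by lia.
rewrite prednK //.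
have [ejp|ejp|->] := ltngtP j (size p).-1; first by rewrite ltnNge ej in ejp.
  have spj : (size p <= j)%N by rewrite -(prednK sp).
  by rewrite !nth_default ?mulr0 ?subrr // -{1}(subKn qp) leq_sub2r.
have -> : ((size p).-1 - (size p - size q) = (size q).-1)%N.
  by rewrite -!subn1 subnAC subKn.
by rewrite !lead_coefE mulrC subrr.
Qed.

Lemma deriv_neq0 (R : numDomainType) (p : {poly R}) : (1 < size p)%N -> p^`() != 0.
Proof.
move=> sp; have sp1 : (size p).-2.+1 = (size p).-1 by case: (size p) sp => [|[|k]].
apply/eqP => /(congr1 (fun q : {poly R} => q`_(size p).-2)) /eqP.
rewrite coef_deriv coef0 sp1 -lead_coefE mulrn_eq0 lead_coef_eq0 -size_poly_eq0.
by case: (size p) sp => [|[|k]].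
Qed.

Section MMap.
Variables (N : nat) (R S : comNzRingType).
Implicit Types (p : {mpoly R[N]}) (f : R -> S) (h : 'I_N -> S).

Lemma eq_mmap_vars f h h' p :
  (forall m : 'X_{1..N}, p@_m != 0 -> forall i, m i != 0%N -> h i = h' i) ->
  mmap f h p = mmap f h' p.
Proof.
move=> hh'; apply: eq_big_seq => m; rewrite mcoeff_msupp => pm.
congr (_ * _); apply: eq_bigr => i _.
by have [->|mi] := eqVneq (m i) 0%N; rewrite ?expr0 // (hh' _ pm i mi).
Qed.

Lemma eq_mmap_coef f f' h p : f =1 f' -> mmap f h p = mmap f' h p.
Proof. by move=> ff'; apply: eq_bigr => m _; rewrite ff'. Qed.

Lemma rmorph_mmap (T : comNzRingType) (phi : {rmorphism S -> T}) f h p :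
  phi (mmap f h p) = mmap (phi \o f) (phi \o h) p.
Proof.
rewrite /mmap rmorph_sum; apply: eq_bigr => m _.
by rewrite rmorphM rmorph_prod; congr (_ * _); apply: eq_bigr => i _; rewrite rmorphXn.
Qed.
End MMap.

Lemma mmap_id (N : nat) (R : comNzRingType) (p : {mpoly R[N]}) :
  mmap (@mpolyC N R) (fun i => 'X_i) p = p.
Proof.
rewrite -[RHS](comp_mpoly_id p); apply: eq_mmap_vars => m _ i _.
by rewrite tnth_mktuple.
Qed.

Section VarsIn.
Variables (N : nat) (R : comNzRingType) (S : 'I_N -> Prop).
Implicit Types p q : {mpoly R[N]}.

Definition vars_in p := forall m : 'X_{1..N}, p@_m != 0 -> forall i, m i != 0%N -> S i.

Lemma vars_in0 : vars_in 0.
Proof. by move=> m; rewrite mcoeff0 eqxx. Qed.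

Lemma vars_inXm (m : 'X_{1..N}) : (forall i, m i != 0%N -> S i) -> vars_in 'X_[m].
Proof. by move=> Sm m'; rewrite mcoeffX; have [<-|] := eqVneq m m'; rewrite ?eqxx. Qed.

Lemma vars_inC c : vars_in c%:MP.
Proof.
move=> m; rewrite mcoeffC; have [-> _ i|] := eqVneq m 0%MM; last by rewrite mulr0 eqxx.
by rewrite mnm0E eqxx.
Qed.

Lemma vars_in1 : vars_in 1.
Proof. exact: vars_inC. Qed.

Lemma vars_inX i : S i -> vars_in 'X_i.
Proof. by move=> Si; apply: vars_inXm => j; rewrite mnm1E; have [<-|] := eqVneq i j. Qed.

Lemma vars_inD p q : vars_in p -> vars_in q -> vars_in (p + q).
Proof.
move=> Sp Sq m; rewrite mcoeffD; have [p0|pm _] := eqVneq p@_m 0; last exact: Sp.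
by rewrite p0 add0r; apply: Sq.
Qed.

Lemma vars_inZ c p : vars_in p -> vars_in (c *: p).
Proof.
by move=> Sp m; rewrite mcoeffZ => cpm; apply: Sp; apply: contraNneq cpm => ->; rewrite mulr0.
Qed.

Lemma vars_inB p q : vars_in p -> vars_in q -> vars_in (p - q).
Proof. by move=> Sp Sq; apply: vars_inD => // m; rewrite mcoeffN oppr_eq0; apply: Sq. Qed.

Lemma vars_inM p q : vars_in p -> vars_in q -> vars_in (p * q).
Proof.
move=> Sp Sq m pqm i; have: m \in msupp (p * q) by rewrite mcoeff_msupp.
move/msuppM_le/allpairsP => [[m1 m2] /= [m1p m2q ->]].
rewrite mnmDE; have [->|m1i] /= := eqVneq (m1 i) 0%N.
  by apply: Sq; rewrite -mcoeff_msupp.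
by move=> _; apply: (Sp m1) => //; rewrite -mcoeff_msupp.
Qed.

Lemma vars_inXn p k : vars_in p -> vars_in (p ^+ k).
Proof. by move=> Sp; elim: k => [|k IH]; [exact: vars_in1 | rewrite exprS; apply: vars_inM]. Qed.

Lemma vars_in_sum (I : Type) (r : seq I) (P : pred I) (F : I -> {mpoly R[N]}) :
  (forall i, P i -> vars_in (F i)) -> vars_in (\sum_(i <- r | P i) F i).
Proof. by move=> SF; apply: (big_ind vars_in) => //; [exact: vars_in0 | exact: vars_inD]. Qed.

Lemma vars_in_prod (I : Type) (r : seq I) (P : pred I) (F : I -> {mpoly R[N]}) :
  (forall i, P i -> vars_in (F i)) -> vars_in (\prod_(i <- r | P i) F i).
Proof. by move=> SF; apply: (big_ind vars_in) => //; [exact: vars_in1 | exact: vars_inM]. Qed.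

Lemma vars_in_mderiv p i : vars_in p -> vars_in p^`M(i).
Proof.
move=> Sp m; rewrite mcoeff_mderiv => pm j mj.
apply: (Sp (m + U_(i))%MM); first by apply: contraNneq pm => ->; rewrite mul0rn.
by rewrite mnmDE; move: mj; case: (m j).
Qed.

Lemma mderiv_vars_notin p i : vars_in p -> ~ S i -> p^`M(i) = 0.
Proof.
move=> Sp Si; apply/mpolyP => m; rewrite mcoeff_mderiv mcoeff0.
have [->|pm] := eqVneq p@_(m + U_(i))%MM 0; first by rewrite mul0rn.
by case: Si; apply: (Sp _ pm); rewrite mnmDE mnm1E eqxx addn1.
Qed.
End VarsIn.

Lemma vars_inW N (R : comNzRingType) (S S' : 'I_N -> Prop) (p : {mpoly R[N]}) :
  (forall i, S i -> S' i) -> vars_in S p -> vars_in S' p.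
Proof. by move=> SS' Sp m pm i mi; apply/SS'/(Sp m pm i mi). Qed.

Section MPolyOverClosure.
Variables (R : comNzRingType) (S : subringClosed R).

Lemma mpolyOver_mderiv N (p : {mpoly R[N]}) i :
  p \is a mpolyOver N S -> p^`M(i) \is a mpolyOver N S.
Proof. by move=> /mpolyOverP Sp; apply/mpolyOverP => m; rewrite mcoeff_mderiv rpredMn. Qed.

Lemma mpolyOver_mmap N M (h : 'I_N -> {mpoly R[M]}) (p : {mpoly R[N]}) :
  p \is a mpolyOver N S -> (forall i, h i \is a mpolyOver M S) ->
  mmap (@mpolyC M R) h p \is a mpolyOver M S.
Proof.
move=> /mpolyOverP Sp Sh; rewrite rpred_sum // => m _.
by rewrite rpredM ?mpolyOverC ?rpred_prod // => i _; rewrite rpredX.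
Qed.
End MPolyOverClosure.

Lemma msize_mderiv_lt (N : nat) (R : comNzRingType) (p : {mpoly R[N]}) i :
  p != 0 -> (msize p^`M(i) < msize p)%N.
Proof.
move=> p0; have sp : (0 < msize p)%N by rewrite lt0n msize_poly_eq0.
rewrite -(prednK sp) ltnS msizeE; apply/bigmax_leqP_seq => m.
rewrite mcoeff_msupp mcoeff_mderiv => pm _.
have : (m + U_(i))%MM \in msupp p.
  by rewrite mcoeff_msupp; apply: contraNneq pm => ->; rewrite mul0rn.
by move/msize_mdeg_lt; rewrite mdegD mdeg1 addn1 ltn_predRL.
Qed.

Lemma mderiv_neq0 (N : nat) (R : numDomainType) (p : {mpoly R[N]}) m i :
  p@_m != 0 -> m i != 0%N -> p^`M(i) != 0.
Proof.
move=> pm mi; apply/eqP => /(congr1 (mcoeff (m - U_(i))%MM)) /eqP.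
rewrite mcoeff_mderiv mcoeff0 submK ?lep1mP // mnmBE mnm1E eqxx subn1 prednK ?lt0n //.
by rewrite mulrn_eq0 (negbTE pm) (negbTE mi).
Qed.

Lemma exists_nonconst_monomial (N : nat) (R : comNzRingType) (z : 'I_N -> R)
    (p : {mpoly R[N]}) :
  p != 0 -> p.@[z] = 0 -> exists m i, p@_m != 0 /\ m i != 0%N.
Proof.
move=> p0 p_z; apply: NNPP => no_mono; case/eqP: p0.
have p_const : p = (p@_0%MM)%:MP.
  apply/mpolyP => m; rewrite mcoeffC; have [->|m0] := eqVneq m 0%MM; first by rewrite mulr1.
  rewrite mulr0; have [//|pm] := eqVneq p@_m 0; case/eqP: m0; apply/mnmP => i.
  by rewrite mnm0E; have [//|mi] := eqVneq (m i) 0%N; case: no_mono; exists m, i.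
by move: p_z; rewrite p_const mevalC => ->; rewrite mpolyC0.
Qed.

Lemma exists_relation_nonsingular (N : nat) (R : numFieldType) (S : subringClosed R)
    (V : 'I_N -> Prop) (z : 'I_N -> R) (p : {mpoly R[N]}) :
  p \is a mpolyOver N S -> vars_in V p -> p.@[z] = 0 -> p != 0 ->
  exists q i, [/\ q \is a mpolyOver N S, vars_in V q, q.@[z] = 0, V i &
    (q^`M(i)).@[z] != 0].
Proof.
move=> Sp Vp p_z p0.
pose relation q := [/\ q \is a mpolyOver N S, vars_in V q, q.@[z] = 0 & q != 0].
have [q [[Sq Vq q_z q0] min_q]] :=
  exists_minimizer (fun q => msize q) (ex_intro relation p (And4 Sp Vp p_z p0)).
have [m [i [qm mi]]] := exists_nonconst_monomial q0 q_z.
exists q, i; split=> //; first exact: (Vq m qm i mi).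
apply/eqP => q'_z; have : relation q^`M(i).
  split; [exact: mpolyOver_mderiv | exact: vars_in_mderiv | exact: q'_z |].
  exact: mderiv_neq0 qm mi.
by move/min_q; rewrite leqNgt msize_mderiv_lt.
Qed.

Section DirectionalDerivative.
Variables (N : nat) (R : comNzRingType) (z : 'I_N -> R).
Implicit Types (p q : {mpoly R[N]}) (d : 'I_N -> R).

Definition dderiv d p := \sum_(i < N) d i * (p^`M(i)).@[z].

Lemma dderivD d p q : dderiv d (p + q) = dderiv d p + dderiv d q.
Proof. by rewrite /dderiv -big_split; apply: eq_bigr => i _; rewrite mderivD mevalD mulrDr. Qed.

Lemma dderivB d p q : dderiv d (p - q) = dderiv d p - dderiv d q.
Proof. by rewrite /dderiv -sumrB; apply: eq_bigr => i _; rewrite mderivB mevalB mulrBr. Qed.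

Lemma dderivC d c : dderiv d c%:MP = 0.
Proof. by rewrite /dderiv big1 // => i _; rewrite mderivC meval0 mulr0. Qed.

Lemma dderivM d p q : dderiv d (p * q) = dderiv d p * q.@[z] + p.@[z] * dderiv d q.
Proof.
rewrite /dderiv mulr_suml mulr_sumr -big_split; apply: eq_bigr => i _.
by rewrite mderivM mevalD !mevalM mulrDr; congr (_ + _); ring.
Qed.

Lemma dderiv_sum d (I : Type) (r : seq I) (P : pred I) (F : I -> {mpoly R[N]}) :
  dderiv d (\sum_(i <- r | P i) F i) = \sum_(i <- r | P i) dderiv d (F i).
Proof. by apply: big_morph; [exact: dderivD | rewrite -mpolyC0 dderivC]. Qed.

Lemma eq_dderiv_vars (S : 'I_N -> Prop) d d' p :
  (forall i, S i -> d i = d' i) -> vars_in S p -> dderiv d p = dderiv d' p.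
Proof.
move=> dd' Sp; apply: eq_bigr => i _; have [Si|Si] := classic (S i); first by rewrite dd'.
by rewrite (mderiv_vars_notin Sp Si) meval0 !mulr0.
Qed.

Definition dset d i0 v := fun i => if i == i0 then v else d i.

Lemma dderiv_set d i0 v p :
  dderiv (dset d i0 v) p = dderiv d p + (v - d i0) * (p^`M(i0)).@[z].
Proof.
rewrite /dderiv (bigD1 i0) //= [in RHS](bigD1 i0) //= /dset eqxx.
rewrite (eq_bigr (fun i => d i * (p^`M(i)).@[z])) => [|i /negbTE -> //].
ring.
Qed.
End DirectionalDerivative.

Section CoefInVar.
Variables (N : nat) (R : comNzRingType) (i0 : 'I_N).
Implicit Types p q : {mpoly R[N]}.

Definition mnm_drop (m : 'X_{1..N}) : 'X_{1..N} :=
  [multinom (if i == i0 then 0%N else m i) | i < N].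

Definition mcoefX p e : {mpoly R[N]} :=
  \sum_(m <- msupp p | m i0 == e) p@_m *: 'X_[mnm_drop m].

Lemma msupp_var_lt_msize p m : m \in msupp p -> (m i0 < msize p)%N.
Proof. by move/msize_mdeg_lt; apply: leq_ltn_trans; rewrite mdegE (bigD1 i0) //= leq_addr. Qed.

Lemma mcoefX_eq0 p e : (msize p <= e)%N -> mcoefX p e = 0.
Proof.
move=> pe; rewrite /mcoefX big_seq_cond big1 // => m /andP[pm /eqP mi0].
by move: (msupp_var_lt_msize pm); rewrite mi0 ltnNge pe.
Qed.

Lemma mpoly_expand_var p : p = \sum_(e < msize p) mcoefX p e * 'X_i0 ^+ e.
Proof.
rewrite (eq_bigr (fun e : 'I_(msize p) => \sum_(m <- msupp p)
    (if m i0 == e then p@_m *: 'X_[m] else 0))) => [|e _]; last first.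
  rewrite big_distrl /= big_mkcond /=; apply: eq_bigr => m _.
  have [mi0|//] := eqVneq (m i0) e.
  rewrite -scalerAl mpolyXn -mpolyXD; congr (_ *: 'X_[_]).
  apply/mnmP => i; rewrite mnmDE mnmE mulmnE mnm1E.
  by have [<-|] := eqVneq i0 i; rewrite ?mi0 ?mul1n //= addn0.
rewrite exchange_big /= [LHS]mpolyE; apply: eq_big_seq => m pm.
rewrite -big_mkcond /= (big_pred1 (Ordinal (msupp_var_lt_msize pm))) // => e.
by rewrite /= eq_sym -val_eqE.
Qed.

Lemma mpolyOver_mcoefX (S : subringClosed R) p e :
  p \is a mpolyOver N S -> mcoefX p e \is a mpolyOver N S.
Proof.
move=> /mpolyOverP Sp; rewrite rpred_sum // => m _.
by rewrite mpolyOverZ ?Sp ?mpolyOverX.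
Qed.

Lemma vars_in_mcoefX (S : 'I_N -> Prop) p e :
  vars_in S p -> vars_in (fun i => S i /\ i != i0) (mcoefX p e).
Proof.
move=> Sp; rewrite /mcoefX big_seq_cond; apply: vars_in_sum => m /andP[pm _].
apply: vars_inZ; apply: vars_inXm => i; rewrite mnmE; have [->|ni0 mi] := eqVneq i i0.
  by rewrite eqxx.
by split=> //; apply: (Sp m) => //; rewrite -mcoeff_msupp.
Qed.

Lemma mderiv_mcoefX p e : (mcoefX p e)^`M(i0) = 0.
Proof.
apply: (@mderiv_vars_notin _ _ (fun i => True /\ i != i0)); last by case=> _; rewrite eqxx.
by apply: vars_in_mcoefX => ? _ ? _.
Qed.
End CoefInVar.

Section EvalBut.
Variables (N : nat) (R : comNzRingType) (z : 'I_N -> R) (i0 : 'I_N).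
Implicit Types p q : {mpoly R[N]}.

Definition meval_but_var i : {poly R} := if i == i0 then 'X else (z i)%:P.

Definition meval_but p : {poly R} := mmap (@polyC R) meval_but_var p.

HB.instance Definition _ :=
  GRing.RMorphism.copy meval_but (mmap (@polyC R) meval_but_var).

Lemma meval_butXn k : meval_but ('X_i0 ^+ k) = 'X^k.
Proof. by rewrite rmorphXn /= /meval_but mmapX mmap1U /meval_but_var eqxx. Qed.

Lemma horner_meval_but p : (meval_but p).[z i0] = p.@[z].
Proof.
rewrite -horner_evalE /meval_but rmorph_mmap.
rewrite (@eq_mmap_coef _ _ _ _ idfun) => [|c /=]; last by rewrite horner_evalE hornerC.
apply: eq_mmap_vars => m _ i _ /=; rewrite horner_evalE /meval_but_var.
by have [->|_] := eqVneq i i0; rewrite ?hornerX ?hornerC.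
Qed.

Lemma meval_but_const p : vars_in (fun i => i != i0) p -> meval_but p = (p.@[z])%:P.
Proof.
move=> p_i0; rewrite /meval_but (@eq_mmap_vars _ _ _ _ _ (fun i => (z i)%:P)).
  by rewrite /meval rmorph_mmap.
by move=> m pm i mi; rewrite /meval_but_var (negbTE (p_i0 m pm i mi)).
Qed.

Lemma meval_but_mcoefX p e : meval_but (mcoefX i0 p e) = ((mcoefX i0 p e).@[z])%:P.
Proof.
apply: meval_but_const; apply: (@vars_inW _ _ (fun i => True /\ i != i0)) => [i []//|].
by apply: vars_in_mcoefX => ? _ ? _.
Qed.

Lemma coef_meval_but p e : (meval_but p)`_e = (mcoefX i0 p e).@[z].
Proof.
rewrite {1}[p](mpoly_expand_var i0) rmorph_sum coef_sum.
rewrite (eq_bigr (fun e' : 'I_(msize p) => (mcoefX i0 p e').@[z] * (e == e')%:R)).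
  have [pe|pe] := ltnP e (msize p); last first.
    rewrite mcoefX_eq0 // meval0 big1 // => e' _.
    by rewrite gtn_eqF ?mulr0 // (leq_trans (ltn_ord e') pe).
  rewrite (bigD1 (Ordinal pe)) //= eqxx mulr1 big1 ?addr0 // => e' ne'.
  by rewrite (_ : (e == e') = false) ?mulr0 //; apply: contraNF ne' => /eqP ee'; apply/eqP/val_inj.
by move=> e' _; rewrite rmorphM /= meval_but_mcoefX meval_butXn coefCM coefXn.
Qed.

Lemma meval_but_mderiv p : meval_but p^`M(i0) = (meval_but p)^`().
Proof.
rewrite {1 2}[p](mpoly_expand_var i0).
rewrite (big_morph (mderiv i0) (mderivD i0) (mderiv0 _ i0)) !rmorph_sum /=.
rewrite (big_morph _ (@derivD R) (@deriv0 R)); apply: eq_bigr => e _.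
rewrite mderivM mderiv_mcoefX mul0r add0r !rmorphM /= meval_but_mcoefX.
rewrite !mpolyXn mderivX mulmnE mnm1E eqxx mul1n -mpolyXn.
suff -> : (U_(i0) *+ e - U_(i0))%MM = (U_(i0) *+ e.-1)%MM.
  by rewrite -mpolyXn scaler_nat rmorphMn /= !meval_butXn deriv_mulC derivXn mulrnAr.
apply/mnmP => i; rewrite mnmBE !mulmnE mnm1E.
by case: (i0 == i); rewrite ?mul1n ?subn1 ?mul0n.
Qed.
End EvalBut.

Section Tangent.
Variables (N : nat) (R : numFieldType) (S : subringClosed R) (z : 'I_N -> R).
Implicit Types (p q : {mpoly R[N]}) (V : 'I_N -> Prop) (d : 'I_N -> R).

(* [d] is tangent at [z] to the [S]-relations among the coordinates in [V]:
   [p.@[z] |-> dderiv z d p] is then a well-defined derivation of [S[z_V]]. *)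
Definition tangent V d := forall p, p \is a mpolyOver N S -> vars_in V p ->
  p.@[z] = 0 -> dderiv z d p = 0.

Section AddVariable.
Variables (V : 'I_N -> Prop) (i0 : 'I_N) (d : 'I_N -> R).
Hypotheses (V_i0 : ~ V i0) (d_tangent : tangent V d).

Let V1 i := V i \/ i = i0.

Let relation p := [/\ p \is a mpolyOver N S, vars_in V1 p & p.@[z] = 0].

Lemma vars_in_mcoefX_drop p e : vars_in V1 p -> vars_in V (mcoefX i0 p e).
Proof.
move=> V1p; apply: (vars_inW _ (vars_in_mcoefX (i0 := i0) (e := e) V1p)) => i [[//|->]].
by rewrite eqxx.
Qed.

Lemma dderiv_set_meval_but0 v p : relation p -> meval_but z i0 p = 0 ->
  dderiv z (dset d i0 v) p = 0.
Proof.
move=> [Sp V1p _] p0; rewrite (mpoly_expand_var i0 p) dderiv_sum big1 // => e _.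
have ce0 : (mcoefX i0 p e).@[z] = 0 by rewrite -coef_meval_but p0 coef0.
have V_ce := vars_in_mcoefX_drop (e := e) V1p.
rewrite dderivM ce0 mul0r addr0 (eq_dderiv_vars _ (d' := d) _ V_ce).
  by rewrite d_tangent ?mul0r // mpolyOver_mcoefX.
by move=> i Vi; rewrite /dset; case: eqP => // eq_i; rewrite eq_i in Vi.
Qed.

Lemma relation_reduce mu p : relation mu -> relation p ->
  meval_but z i0 mu != 0 -> (size (meval_but z i0 mu) <= size (meval_but z i0 p))%N ->
  exists a b, [/\ relation (a * p - b * mu), a.@[z] != 0 &
    (size (meval_but z i0 (a * p - b * mu)) < size (meval_but z i0 p))%N].
Proof.
move=> [Smu V1mu mu_z] [Sp V1p p_z] mu0 le_mu_p.
set emu := (size (meval_but z i0 mu)).-1; set ep := (size (meval_but z i0 p)).-1.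
have V1ce q e : vars_in V1 q -> vars_in V1 (mcoefX i0 q e).
  by move=> V1q; apply: vars_inW (vars_in_mcoefX_drop (e := e) V1q) => i; left.
have leadE q : (mcoefX i0 q (size (meval_but z i0 q)).-1).@[z] = lead_coef (meval_but z i0 q).
  by rewrite -coef_meval_but lead_coefE.
exists (mcoefX i0 mu emu), (mcoefX i0 p ep * 'X_i0 ^+ (ep - emu)); split.
- rewrite /relation; split; last by rewrite mevalB !mevalM p_z mu_z !mulr0 subrr.
    by rewrite rpredB ?rpredM ?rpredX ?mpolyOver_mcoefX ?mpolyOverX.
  apply: vars_inB; apply: vars_inM => //; try exact: V1ce.
  by apply: vars_inM; [exact: V1ce | apply: vars_inXn; apply: vars_inX; right].
- by rewrite leadE lead_coef_eq0.
have smu : (0 < size (meval_but z i0 mu))%N by rewrite size_poly_gt0.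
rewrite rmorphB !rmorphM /= !meval_but_mcoefX meval_butXn leadE leadE !mul_polyC.
have -> : (ep - emu = size (meval_but z i0 p) - size (meval_but z i0 mu))%N.
  by rewrite /ep /emu -!subn1; lia.
by rewrite -scalerAl; apply: size_lead_coef_elim.
Qed.

Lemma mderiv_minimal_relation mu : relation mu -> meval_but z i0 mu != 0 ->
  (forall p, relation p -> meval_but z i0 p != 0 ->
     (size (meval_but z i0 mu) <= size (meval_but z i0 p))%N) ->
  (mu^`M(i0)).@[z] != 0.
Proof.
move=> [Smu V1mu mu_z] mu0 min_mu.
have smu : (1 < size (meval_but z i0 mu))%N.
  rewrite ltnNge; apply: contra mu0 => /size1_polyC mu_const.
  by move: (horner_meval_but z i0 mu); rewrite mu_z mu_const hornerC => ->.
have mu'0 : meval_but z i0 mu^`M(i0) != 0 by rewrite meval_but_mderiv deriv_neq0.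
apply/eqP => mu'_z.
have rel_mu' : relation mu^`M(i0).
  by split; [exact: mpolyOver_mderiv | exact: vars_in_mderiv | exact: mu'_z].
by have := min_mu _ rel_mu' mu'0; rewrite meval_but_mderiv leqNgt lt_size_deriv.
Qed.

Lemma tangent_add_variable : exists v, tangent V1 (dset d i0 v).
Proof.
have [ex_rel|no_rel] :=
  classic (exists p, relation p /\ meval_but z i0 p != 0); last first.
  exists 0 => p Sp V1p p_z; apply: dderiv_set_meval_but0; first by rewrite /relation.
  have [//|p0] := eqVneq (meval_but z i0 p) 0.
  by case: no_rel; exists p; split; first rewrite /relation.
have [mu [[rel_mu mu0] min_mu]] :=
  exists_minimizer (fun p => size (meval_but z i0 p)) ex_rel.
have mu'_z : (mu^`M(i0)).@[z] != 0.
  by apply: mderiv_minimal_relation => // p rel_p p0; apply: min_mu.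
(* The value at [i0] is forced by the minimal relation [mu]; every other relation
   reduces to [mu] by [relation_reduce]. *)
set v := d i0 - dderiv z d mu / (mu^`M(i0)).@[z].
have d_mu : dderiv z (dset d i0 v) mu = 0 by rewrite dderiv_set /v; field.
exists v; suff IH s p : (size (meval_but z i0 p) <= s)%N -> relation p ->
    dderiv z (dset d i0 v) p = 0.
  by move=> p Sp V1p p_z; apply: (IH _ p (leqnn _)); rewrite /relation.
elim: s p => [|s IHs] p sp rel_p.
  by apply: dderiv_set_meval_but0 => //; apply/eqP; rewrite -size_poly_eq0 -leqn0.
have [p0|p0] := eqVneq (meval_but z i0 p) 0; first exact: dderiv_set_meval_but0.
have [a [b [rel_ab a_z lt_ab]]] := relation_reduce rel_mu rel_p mu0 (min_mu p (conj rel_p p0)).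
have := IHs _ _ rel_ab; rewrite -ltnS (leq_trans lt_ab sp) => /(_ isT).
have [_ _ p_z] := rel_p; have [_ _ mu_z] := rel_mu.
rewrite dderivB !dderivM d_mu p_z mu_z !mulr0 !add0r subr0 => /eqP.
by rewrite mulf_eq0 (negbTE a_z) => /eqP.
Qed.
End AddVariable.
End Tangent.

Section JoinPoint.
Variables (n m : nat) (x : 'I_n -> C) (y : 'I_m -> C).

Lemma join_pt_lshift i : join_pt x y (lshift m i) = x i.
Proof. by rewrite /join_pt (unsplitK (inl i : 'I_n + 'I_m)). Qed.

Lemma join_pt_rshift j : join_pt x y (rshift n j) = y j.
Proof. by rewrite /join_pt (unsplitK (inr j : 'I_n + 'I_m)). Qed.
End JoinPoint.

Section TangentExtension.
Variables (K : C -> Prop) (HK : is_subfield K) (n m : nat).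
Variables (x : 'I_n -> C) (y : 'I_m -> C).
Hypothesis x_indep : alg_indep_over K x.
Local Notation S := (subfield_pred HK).
Local Notation z := (join_pt x y).

Lemma relation_in_x_eq0 (p : {mpoly C[n + m]}) :
  p \is a mpolyOver _ S -> vars_in (fun i : 'I_(n + m) => (i < n)%N) p ->
  p.@[z] = 0 -> p = 0.
Proof.
move=> Sp Vp p_z.
pose h (i : 'I_(n + m)) : {mpoly C[n]} := if split i is inl i' then 'X_i' else 0.
pose q := mmap (@mpolyC n C) h p.
have q0 : q = 0.
  apply: x_indep; first apply/(coeffs_inP HK).
    by rewrite mpolyOver_mmap // => i; rewrite /h; case: split => *; rewrite ?mpolyOverX ?rpred0.
  rewrite -p_z /q /meval rmorph_mmap.
  rewrite (@eq_mmap_coef _ _ _ _ idfun) => [|c]; last by rewrite /= mmapC.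
  apply: eq_mmap_vars => mono pm i mi /=; rewrite /h /join_pt.
  case: splitP => [i' _|j ij]; first by rewrite mmapX mmap1U.
  by move: (Vp mono pm i mi); rewrite ij ltnNge leq_addr.
suff <- : mmap (@mpolyC (n + m) C) (fun i => 'X_(lshift m i)) q = p by rewrite q0 rmorph0.
rewrite /q rmorph_mmap -[RHS]mmap_id.
rewrite (@eq_mmap_coef _ _ _ _ (@mpolyC _ C)) => [|c]; last by rewrite /= mmapC.
apply: eq_mmap_vars => mono pm i mi /=; rewrite /h.
case: splitP => [i' ii'|j ij]; first by rewrite mmapX mmap1U; congr 'X_(_); apply: val_inj.
by move: (Vp mono pm i mi); rewrite ij ltnNge leq_addr.
Qed.

Lemma tangent_extension_le k : (k <= m)%N -> forall d0 : 'I_(n + m) -> C, exists d,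
  (forall i : 'I_(n + m), (i < n)%N -> d i = d0 i) /\
  tangent S z (fun i : 'I_(n + m) => (i < n + k)%N) d.
Proof.
elim: k => [|k IHk] lt_k_m d0.
  exists d0; split=> // p Sp Vp p_z.
  have -> : p = 0 by apply: relation_in_x_eq0 => //; rewrite addn0 in Vp.
  by rewrite -mpolyC0 dderivC.
have [d [d_d0 d_tangent]] := IHk (ltnW lt_k_m) d0.
have lt_nk : (n + k < n + m)%N by rewrite ltn_add2l.
have [|v v_tangent] := tangent_add_variable (i0 := Ordinal lt_nk) _ d_tangent.
  by rewrite /= ltnn.
exists (dset d (Ordinal lt_nk) v); split.
  move=> i lt_i_n; rewrite /dset; case: eqP => [ei|_]; last exact: d_d0.
  by move: lt_i_n; rewrite ei /= ltnNge leq_addr.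
move=> p Sp Vp p_z; apply: v_tangent => //; apply: vars_inW Vp => i.
rewrite addnS ltnS leq_eqVlt => /orP[/eqP ei|]; last by left.
by right; apply: val_inj.
Qed.

Lemma tangent_extension (d0 : 'I_n -> C) : exists d : 'I_(n + m) -> C,
  (forall i, d (lshift m i) = d0 i) /\
  forall p, p \is a mpolyOver _ S -> p.@[z] = 0 -> dderiv z d p = 0.
Proof.
have [d [d_d0 d_tangent]] := tangent_extension_le (leqnn m) (join_pt d0 (fun _ => 0)).
exists d; split=> [i|p Sp p_z]; first by rewrite d_d0 ?join_pt_lshift //; exact: (ltn_ord i).
by apply: (d_tangent p Sp _ p_z) => mono _ i _; apply: ltn_ord.
Qed.
End TangentExtension.

Section ClearDenominators.
Variables (K : C -> Prop) (HK : is_subfield K) (n m : nat).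
Variables (x : 'I_n -> C) (y : 'I_m -> C).
Local Notation S := (subfield_pred HK).
Local Notation z := (join_pt x y).

Let in_mid (i : 'I_(n + m)) : Prop := (m <= i < n)%N.

(* [u] lies in [K(x_i | m <= i < n)] (0-based indices), presented as a quotient of
   values at [z] of [K]-polynomials in these variables. *)
Definition xfrac (u : C) := exists a b : {mpoly C[n + m]},
  [/\ a \is a mpolyOver _ S, b \is a mpolyOver _ S, vars_in in_mid a /\ vars_in in_mid b,
      b.@[z] != 0 & u = a.@[z] / b.@[z]].

Lemma xfracP (a b : {mpoly C[n + m]}) : a \is a mpolyOver _ S -> b \is a mpolyOver _ S ->
  vars_in in_mid a -> vars_in in_mid b -> b.@[z] != 0 -> xfrac (a.@[z] / b.@[z]).
Proof. by move=> Sa Sb Va Vb bz; exists a, b. Qed.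

Lemma xfrac_subfield : is_subfield xfrac.
Proof.
split.
- rewrite -[1](divr1 1) -(meval1 z).
  by apply: xfracP; rewrite ?rpred1 ?meval1 ?oner_eq0 //; exact: vars_in1.
- move=> _ _ [a [b [Sa Sb [Va Vb] bz ->]]] [c [e [Sc Se [Vc Ve] ez ->]]].
  have -> : a.@[z] / b.@[z] - c.@[z] / e.@[z] = (a * e - c * b).@[z] / (b * e).@[z].
    by rewrite mevalB !mevalM; field; rewrite bz ez.
  apply: xfracP; rewrite ?rpredB ?rpredM ?mevalM ?mulf_neq0 //.
    by apply: vars_inB; apply: vars_inM.
  exact: vars_inM.
- move=> _ _ [a [b [Sa Sb [Va Vb] bz ->]]] [c [e [Sc Se [Vc Ve] ez ->]]].
  have [c0|c0] := eqVneq c.@[z] 0.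
    rewrite c0 mul0r invr0 mulr0 -[0](mul0r 1^-1) -(meval0 z) -(meval1 z).
    apply: xfracP; rewrite ?rpred0 ?rpred1 ?meval1 ?oner_eq0 //.
      exact: vars_in0.
    exact: vars_in1.
  have -> : a.@[z] / b.@[z] / (c.@[z] / e.@[z]) = (a * e).@[z] / (b * c).@[z].
    by rewrite !mevalM; field; rewrite bz c0 ez.
  by apply: xfracP; rewrite ?rpredM ?mevalM ?mulf_neq0 //; apply: vars_inM.
Qed.

Lemma gen_field_xfrac u :
  gen_field K (fun v => exists i : 'I_n, (m <= i)%N /\ v = x i) u -> xfrac u.
Proof.
apply=> [|c Kc|_ [i [mi ->]]]; first exact: xfrac_subfield.
  rewrite -[c]divr1 -(mevalC z c) -(meval1 z).
  apply: xfracP; rewrite ?mpolyOverC ?rpred1 ?meval1 ?oner_eq0 //; last exact: vars_in1.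
    exact/membP.
  exact: vars_inC.
rewrite -[x i]divr1 -(join_pt_lshift x y) -(mevalXU z) -(meval1 z).
apply: xfracP; rewrite ?mpolyOverX ?rpred1 ?meval1 ?oner_eq0 //; last exact: vars_in1.
by apply: vars_inX; rewrite /in_mid /= mi ltn_ord.
Qed.

Lemma xfrac_common_denominator (I : eqType) (s : seq I) (F : I -> C) :
  (forall i, i \in s -> xfrac (F i)) ->
  exists (b : {mpoly C[n + m]}) (A : I -> {mpoly C[n + m]}),
    [/\ b \is a mpolyOver _ S, vars_in in_mid b, b.@[z] != 0 &
    forall i, i \in s ->
      [/\ A i \is a mpolyOver _ S, vars_in in_mid (A i) & F i * b.@[z] = (A i).@[z]]].
Proof.
elim: s => [_|i0 s IHs xfrac_s].
  by exists 1, (fun=> 0); split; rewrite ?rpred1 ?meval1 ?oner_eq0 //; exact: vars_in1.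
have [|b [A [Sb Vb bz HA]]] := IHs.
  by move=> i si; apply: xfrac_s; rewrite in_cons si orbT.
have [a0 [b0 [Sa0 Sb0 [Va0 Vb0] b0z F_i0]]] := xfrac_s i0 (mem_head _ _).
exists (b * b0), (fun i => if i == i0 then a0 * b else A i * b0).
split; rewrite ?rpredM ?mevalM ?mulf_neq0 //; first exact: vars_inM.
move=> i; rewrite in_cons; have [-> _|_ si] := eqVneq i i0.
  split; rewrite ?rpredM //; first exact: vars_inM.
  by rewrite mevalM F_i0; field.
have [SA VA FA] := HA i si.
by split; rewrite ?rpredM ?mevalM ?mulrA ?FA //; apply: vars_inM.
Qed.

Hypothesis le_m_n : (m <= n)%N.
Definition yvars : m.-tuple {mpoly C[n + m]} := [tuple 'X_(rshift n j) | j < m].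

Definition meval_x (p : {mpoly C[n + m]}) : {mpoly C[m]} :=
  mmap (@mpolyC m C)
    (fun k => match split k with inl i => (x i)%:MP | inr j => 'X_j end) p.

HB.instance Definition _ := GRing.RMorphism.copy meval_x
  (mmap (@mpolyC m C) (fun k => match split k with inl i => (x i)%:MP | inr j => 'X_j end)).

Lemma meval_x_yvars (q : {mpoly C[m]}) : meval_x (q \mPo yvars) = q.
Proof.
rewrite /meval_x /comp_mpoly rmorph_mmap -[RHS]mmap_id.
rewrite (@eq_mmap_coef _ _ _ _ (@mpolyC _ C)) => [|c]; last by rewrite /= mmapC.
apply: eq_mmap_vars => mono _ j _ /=.
by rewrite tnth_mktuple mmapX mmap1U (unsplitK (inr j : 'I_n + 'I_m)).
Qed.

Lemma meval_x_vars_x (p : {mpoly C[n + m]}) :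
  vars_in (fun i : 'I_(n + m) => (i < n)%N) p -> meval_x p = (p.@[z])%:MP.
Proof.
move=> Vp; rewrite /meval_x (@eq_mmap_vars _ _ _ _ _ (fun i => (z i)%:MP)).
  by rewrite /meval rmorph_mmap.
move=> mono pm i mi; rewrite /join_pt; case: splitP => [//|j ij].
by move: (Vp mono pm i mi); rewrite ij ltnNge leq_addr.
Qed.

Lemma meval_yvars (q : {mpoly C[m]}) : (q \mPo yvars).@[z] = q.@[y].
Proof.
by rewrite comp_mpoly_meval; apply: meval_eq => j; rewrite tnth_mktuple mevalXU join_pt_rshift.
Qed.

Lemma clear_denominators (p : {mpoly C[m]}) :
  coeffs_in (gen_field K (fun v => exists i : 'I_n, (m <= i)%N /\ v = x i)) p ->
  p != 0 -> p.@[y] = 0 ->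
  exists P : {mpoly C[n + m]}, [/\ P \is a mpolyOver _ S,
    vars_in (fun i : 'I_(n + m) => (m <= i)%N) P, P.@[z] = 0 & P != 0].
Proof.
move=> Fp p0 p_y.
have [b [A [Sb _ bz HA]]] :=
  xfrac_common_denominator (fun mono pm => gen_field_xfrac (Fp mono pm)).
pose P := \sum_(mono <- msupp p) A mono * ('X_[mono] \mPo yvars).
have meval_xP : meval_x P = b.@[z] *: p.
  rewrite rmorph_sum [in RHS](mpolyE p) scaler_sumr; apply: eq_big_seq => mono pm.
  have [_ VA FA] := HA mono pm.
  rewrite rmorphM /= meval_x_yvars meval_x_vars_x; last by apply: vars_inW VA => i /andP[].
  by rewrite -FA mul_mpolyC scalerA mulrC.
exists P; split.
- rewrite /P big_seq rpred_sum // => mono pm; have [SA _ _] := HA mono pm.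
  rewrite rpredM // mpolyOver_mmap ?mpolyOverX // => j.
  by rewrite tnth_mktuple mpolyOverX.
- rewrite /P big_seq; apply: vars_in_sum => mono pm; have [_ VA _] := HA mono pm.
  apply: vars_inM; first by apply: vars_inW VA => i /andP[].
  rewrite comp_mpolyX; apply: vars_in_prod => j _; apply: vars_inXn.
  by rewrite tnth_mktuple; apply: vars_inX; rewrite /= (leq_trans le_m_n) ?leq_addr.
- transitivity (b.@[z] * p.@[y]); last by rewrite p_y mulr0.
  rewrite /P rmorph_sum [in RHS](mpolyE p) rmorph_sum mulr_sumr /=.
  apply: eq_big_seq => mono pm; have [_ _ FA] := HA mono pm.
  by rewrite mevalM meval_yvars -FA mevalZ mulrA [b.@[z] * _]mulrC.
apply: contraNneq p0 => P0; move: meval_xP; rewrite P0 rmorph0 => /esym/eqP.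
by rewrite scaler_eq0 (negbTE bz).
Qed.
End ClearDenominators.

Section Jacobian.
Variables (K : C -> Prop) (HK : is_subfield K) (m n : nat) (lt_m_n : (m < n)%N).
Variables (x : 'I_n -> C) (y : 'I_m -> C) (f : 'I_m -> {mpoly C[n + m]}).
Local Notation S := (subfield_pred HK).
Local Notation z := (join_pt x y).
Hypotheses (Sf : forall j, f j \is a mpolyOver _ S) (f_z : forall j, (f j).@[z] = 0).
Local Notation wd := (widen_ord (ltnW lt_m_n)).
Hypothesis jacobian_neq0 : \det (\matrix_(j < m, i < m)
  ((f j)^`M(lshift m (wd i))).@[z]) != 0.

Variable D : 'I_n -> 'I_(n + m) -> C.
Hypothesis D_x : forall k i, D k (lshift m i) = (i == k)%:R.
Hypothesis D_tangent : forall k p, p \is a mpolyOver _ S -> p.@[z] = 0 -> dderiv z (D k) p = 0.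

Lemma dderiv_basis k p : dderiv z (D k) p =
  (p^`M(lshift m k)).@[z] + \sum_(j < m) D k (rshift n j) * (p^`M(rshift n j)).@[z].
Proof.
rewrite /dderiv big_split_ord /= (bigD1 k) //= D_x eqxx mul1r big1 ?addr0 // => i ik.
by rewrite D_x (negbTE ik) mul0r.
Qed.

Definition ytangent : 'M[C]_m := \matrix_(j < m, k < m) D (wd k) (rshift n j).

Lemma ytangent_unit : ytangent \in unitmx.
Proof.
pose B := \matrix_(j < m, l < m) ((f j)^`M(rshift n l)).@[z].
have jacobianE :
    \matrix_(j < m, i < m) ((f j)^`M(lshift m (wd i))).@[z] = - (B *m ytangent).
  apply/matrixP => j k; rewrite !mxE.
  have /eqP := D_tangent (wd k) (Sf j) (f_z j); rewrite dderiv_basis addr_eq0 => /eqP ->.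
  by congr (- _); apply: eq_bigr => l _; rewrite !mxE mulrC.
move: jacobian_neq0; rewrite jacobianE -scaleN1r detZ det_mulmx !mulf_eq0 !negb_or.
by rewrite unitmxE unitfE => /and3P[].
Qed.

Section Relation.
Variable P : {mpoly C[n + m]}.
Hypotheses (SP : P \is a mpolyOver _ S) (P_z : P.@[z] = 0).
Hypothesis P_vars : vars_in (fun i : 'I_(n + m) => (m <= i)%N) P.

Lemma relation_ypartials_eq0 j : (P^`M(rshift n j)).@[z] = 0.
Proof.
pose w := \row_(j < m) (P^`M(rshift n j)).@[z].
suff w0 : w = 0 by have := congr1 (fun v : 'rV_m => v 0 j) w0; rewrite !mxE.
rewrite -[w](mulmxK ytangent_unit); suff -> : w *m ytangent = 0 by rewrite mul0mx.
apply/rowP => k; rewrite !mxE.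
have := D_tangent (wd k) SP P_z; rewrite dderiv_basis (mderiv_vars_notin P_vars).
  by rewrite meval0 add0r => dP; rewrite -[RHS]dP; apply: eq_bigr => l _; rewrite !mxE mulrC.
by apply/negP; rewrite -ltnNge; exact: (ltn_ord k).
Qed.

Lemma relation_partials_eq0 i : (P^`M(i)).@[z] = 0.
Proof.
case: (splitP i) => [k ik|j ij]; last first.
  by rewrite (_ : i = rshift n j) ?relation_ypartials_eq0 //; apply: val_inj.
rewrite (_ : i = lshift m k); last exact: val_inj.
have := D_tangent k SP P_z; rewrite dderiv_basis big1 ?addr0 // => j _.
by rewrite relation_ypartials_eq0 mulr0.
Qed.
End Relation.
End Jacobian.

Theorem theorem4
  (K : C -> Prop) (HK : is_subfield K)
  (HQ : forall q : rat, K (ratr q))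
  (m n : nat) (Hm : (1 <= m)%N) (Hmn : (m < n)%N)
  (x : 'I_n -> C) (y : 'I_m -> C)
  (f : 'I_m -> {mpoly C[n + m]})
  (HfK : forall j, coeffs_in K (f j))
  (Hf0 : forall j, (f j).@[join_pt x y] = 0)
  (Hx : alg_indep_over K x)
  (Hdet : \det (\matrix_(j < m, i < m)
             ((f j)^`M(lshift m (widen_ord (ltnW Hmn) i))).@[join_pt x y]) != 0) :
  alg_indep_over (gen_field K (fun z => exists i : 'I_n, (m <= i)%N /\ z = x i)) y.
Proof.
move=> p Fp p_y; have [//|p0] := eqVneq p 0; exfalso.
have [P [SP VP P_z P0]] := clear_denominators HK (ltnW Hmn) Fp p0 p_y.
have [Q [i [SQ VQ Q_z _ Q'_z]]] := exists_relation_nonsingular SP VP P_z P0.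
have [D D_spec] :=
  fin_all_exists (fun k => tangent_extension HK y Hx (fun l => (l == k)%:R)).
have Sf j : f j \is a mpolyOver _ (subfield_pred HK) by apply/coeffs_inP.
have D_x k l : D k (lshift m l) = (l == k)%:R by case: (D_spec k).
have D_tangent k := proj2 (D_spec k).
by move/eqP: Q'_z; rewrite (relation_partials_eq0 Sf Hf0 Hdet D_x D_tangent SQ Q_z VQ).
Qed.
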